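(* In the call-by-name $\lambda$-calculus, $\approx^n_A=\approx^n_2=\cong^n=\simeq^n=\approx^n_1$.
   Context: $\Lambda^\bullet$ is the set of closed $\lambda$-terms. Contexts are generated by $C::=x\mid[\cdot]\mid C\,C\mid\lambda x.C$, possibly with several holes numbered left to right; $C[\widetilde M]$ fills the $i$-th hole with $M_i$; $C[M]$ fills every hole with $M$. For $\mathcal{R}\subseteq\Lambda^\bullet\times\Lambda^\bullet$, $\mathcal{R}^\star=\{(C[\widetilde M],C[\widetilde N]) : C\text{ a context},\ M_i\,\mathcal{R}\,N_i\ \forall i,\ C[\widetilde M],C[\widetilde N]\in\Lambda^\bullet\}$. Call-by-name reduction on closed terms: $MN\longrightarrow M'N$ if $M\longrightarrow M'$, and $(\lambda x.P)N\longrightarrow P[N/x]$; $\Longrightarrow$ is its reflexive transitive closure; $M{\Downarrow}$ means $M\Longrightarrow\lambda x.P$ for some closed abstraction. $M\simeq^n N$ iff for all contexts $C$ with $C[M],C[N]$ closed, $C[M]{\Downarrow}\iff C[N]{\Downarrow}$. Evaluation contexts $\mathcal{E}::=[\cdot]\mid\mathcal{E}\,M$ ($M\in\Lambda^\bullet$); $M\cong^n N$ iff for all $\mathcal{E}$, $\mathcal{E}[M]{\Downarrow}\iff\mathcal{E}[N]{\Downarrow}$. A relation $\mathcal{R}$ on $\Lambda^\bullet$ is an applicative bisimulation if $M\,\mathcal{R}\,N$ implies: whenever $M\Longrightarrow\lambda x.P$, then $N\Longrightarrow\lambda x.Q$ for some $Q$ with $P[W/x]\,\mathcal{R}\,Q[W/x]$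 for all $W\in\Lambda^\bullet$, and conversely; $\approx^n_A$ is the union of all applicative bisimulations. A coupled relation is a pair $(\mathcal{R}_1,\mathcal{R}_2)$ of relations on $\Lambda^\bullet$ with $\mathcal{R}_1\subseteq\mathcal{R}_2$; it is a (call-by-name) coupled logical bisimulation if whenever $M\,\mathcal{R}_2\,N$: (1) if $M\longrightarrow M'$ then there is $N'$ with $N\Longrightarrow N'$ and $M'\,\mathcal{R}_2\,N'$; (2) if $M=\lambda x.M'$ then $N\Longrightarrow\lambda x.N'$ for some $N'$ and for all $P,Q\in\Lambda^\bullet$ with $P\,\mathcal{R}_1^\star\,Q$, $M'[P/x]\,\mathcal{R}_2\,N'[Q/x]$; (3) the converses with $M$ and $N$ exchanged. $(\approx^n_1,\approx^n_2)$ is the componentwise union of all such bisimulations. *)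

From Stdlib Require Import List Arith.
Import ListNotations.

Inductive term : Type :=
| Var : nat -> term
| App : term -> term -> term
| Lam : term -> term.

Fixpoint closed_at (k : nat) (t : term) : Prop :=
  match t with
  | Var n => n < k
  | App a b => closed_at k a /\ closed_at k b
  | Lam b => closed_at (S k) b
  end.

Definition closed (t : term) : Prop := closed_at 0 t.

(* t[N/k] for a CLOSED N (no lifting of N needed); indices above k are
   decremented since the binder for k disappears. *)
Fixpoint subst (k : nat) (N : term) (t : term) : term :=
  match t with
  | Var n => if Nat.eqb n k then N else if Nat.ltb k n then Var (pred n) else Var n
  | App a b => App (subst k N a) (subst k N b)
  | Lam b => Lam (subst (S k) N b)
  end.

(* P[N/x] where lambda x. P is written Lam P *)
Definition subst0 (P N : term) : term := subst 0 N P.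

Inductive red : term -> term -> Prop :=
| red_app : forall M M' N, red M M' -> red (App M N) (App M' N)
| red_beta : forall P N, red (App (Lam P) N) (subst0 P N).

Inductive reds : term -> term -> Prop :=
| reds_refl : forall M, reds M M
| reds_step : forall M M' M'', red M M' -> reds M' M'' -> reds M M''.

Definition conv (M : term) : Prop := exists P, reds M (Lam P).

(* Contexts, possibly with several holes (capturing: filling is literal). *)
Inductive ctx : Type :=
| CVar : nat -> ctx
| CHole : ctx
| CApp : ctx -> ctx -> ctx
| CLam : ctx -> ctx.

Fixpoint nholes (C : ctx) : nat :=
  match C with
  | CVar _ => 0
  | CHole => 1
  | CApp C1 C2 => nholes C1 + nholes C2
  | CLam C1 => nholes C1
  end.

(* C[M_1,...,M_n]: fill the i-th hole (left to right) with the i-th term *)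
Fixpoint fill (C : ctx) (l : list term) : term :=
  match C with
  | CVar n => Var n
  | CHole => match l with M :: _ => M | [] => Var 0 end
  | CApp C1 C2 => App (fill C1 (firstn (nholes C1) l)) (fill C2 (skipn (nholes C1) l))
  | CLam C1 => Lam (fill C1 l)
  end.

Fixpoint fill_all (C : ctx) (M : term) : term :=
  match C with
  | CVar n => Var n
  | CHole => M
  | CApp C1 C2 => App (fill_all C1 M) (fill_all C2 M)
  | CLam C1 => Lam (fill_all C1 M)
  end.

Definition relation := term -> term -> Prop.

Definition rel_closed (R : relation) : Prop :=
  forall M N, R M N -> closed M /\ closed N.

Definition star (R : relation) : relation := fun M N =>
  exists (C : ctx) (Ms Ns : list term),
    length Ms = nholes C /\ Forall2 R Ms Ns /\
    M = fill C Ms /\ N = fill C Ns /\ closed M /\ closed N.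

Definition ctx_equiv (M N : term) : Prop :=
  forall C : ctx, closed (fill_all C M) -> closed (fill_all C N) ->
    (conv (fill_all C M) <-> conv (fill_all C N)).

Inductive ectx : Type :=
| EHole : ectx
| EApp : ectx -> term -> ectx.

Fixpoint ectx_ok (E : ectx) : Prop :=
  match E with
  | EHole => True
  | EApp E' M => ectx_ok E' /\ closed M
  end.

Fixpoint efill (E : ectx) (M : term) : term :=
  match E with
  | EHole => M
  | EApp E' N => App (efill E' M) N
  end.

Definition eval_equiv (M N : term) : Prop :=
  forall E : ectx, ectx_ok E -> (conv (efill E M) <-> conv (efill E N)).

Definition app_bisim (R : relation) : Prop :=
  rel_closed R /\
  forall M N, R M N ->
    (forall P, reds M (Lam P) -> exists Q, reds N (Lam Q) /\
        forall W, closed W -> R (subst0 P W) (subst0 Q W)) /\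
    (forall Q, reds N (Lam Q) -> exists P, reds M (Lam P) /\
        forall W, closed W -> R (subst0 P W) (subst0 Q W)).

Definition app_bisimilar (M N : term) : Prop :=
  exists R, app_bisim R /\ R M N.

Definition coupled_lbisim (R1 R2 : relation) : Prop :=
  rel_closed R1 /\ rel_closed R2 /\
  (forall M N, R1 M N -> R2 M N) /\
  forall M N, R2 M N ->
    (forall M', red M M' -> exists N', reds N N' /\ R2 M' N') /\
    (forall M', M = Lam M' -> exists N', reds N (Lam N') /\
        forall P Q, star R1 P Q -> R2 (subst0 M' P) (subst0 N' Q)) /\
    (forall N', red N N' -> exists M', reds M M' /\ R2 M' N') /\
    (forall N', N = Lam N' -> exists M', reds M (Lam M') /\
        forall P Q, star R1 P Q -> R2 (subst0 M' P) (subst0 N' Q)).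

Definition clb1 (M N : term) : Prop :=
  exists R1 R2, coupled_lbisim R1 R2 /\ R1 M N.
Definition clb2 (M N : term) : Prop :=
  exists R1 R2, coupled_lbisim R1 R2 /\ R2 M N.

From Stdlib Require Import List Arith Lia.
Import ListNotations.

(* Every one of the five equivalences coincides with applicative equivalence:
   M and N converge under the same lists of closed arguments, which is what
   evaluation contexts supply.  Since reduction is deterministic and only
   contracts head redexes, a bisimulation can be chased along the unique
   converging reduction of [M w1 ... wk].  The heart of the matter is the
   context lemma: the compatible closure of applicative equivalence is again
   applicative equivalence.  It is proved by simulating each step of [X] in a
   compatible partner [Y]; the only delicate step is a head redex whose
   function part is related to [Y]'s by the base relation, where the redex is
   fired in [X] only and [Y] is shown applicatively larger.  The context lemma
   makes applicative equivalence a coupled logical bisimulation (the terms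
   substituted are related by its [star]) and gives contextual equivalence. *)

Lemma closed_at_weaken t k k' : closed_at k t -> k <= k' -> closed_at k' t.
Proof.
  revert k k'; induction t as [n|a IHa b IHb|a IHa]; simpl; intros k k' Ht Hk.
  - lia.
  - destruct Ht; split; eauto.
  - apply (IHa (S k)); [assumption | lia].
Qed.

Lemma subst_closed_at t k N : closed_at k t -> subst k N t = t.
Proof.
  revert k; induction t as [n|a IHa b IHb|a IHa]; simpl; intros k Ht.
  - destruct (Nat.eqb_spec n k); [lia|].
    destruct (Nat.ltb_spec k n); [lia|reflexivity].
  - destruct Ht; rewrite IHa, IHb; auto.
  - rewrite IHa; auto.
Qed.

Lemma closed_at_subst t k N :
  closed_at (S k) t -> closed N -> closed_at k (subst k N t).
Proof.
  revert k; induction t as [n|a IHa b IHb|a IHa]; simpl; intros k Ht HN.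
  - destruct (Nat.eqb_spec n k).
    + eapply closed_at_weaken; [eassumption | lia].
    + destruct (Nat.ltb_spec k n); simpl; lia.
  - destruct Ht; split; auto.
  - apply IHa; auto.
Qed.

Lemma closed_subst0 P N : closed (Lam P) -> closed N -> closed (subst0 P N).
Proof. exact (closed_at_subst P 0 N). Qed.

Lemma red_closed X Y : red X Y -> closed X -> closed Y.
Proof.
  unfold closed; induction 1; simpl; intros HX.
  - destruct HX; split; auto.
  - destruct HX; apply closed_subst0; auto.
Qed.

Lemma reds_closed X Y : reds X Y -> closed X -> closed Y.
Proof. induction 1; eauto using red_closed. Qed.

Lemma Lam_irred P X : ~ red (Lam P) X.
Proof. intros H; inversion H. Qed.

Lemma red_det X Y Z : red X Y -> red X Z -> Y = Z.
Proof.
  intros HY; revert Z; induction HY; intros Z HZ; inversion HZ; subst.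
  - f_equal; auto.
  - exfalso; eapply Lam_irred; eassumption.
  - exfalso; eapply Lam_irred; eassumption.
  - reflexivity.
Qed.

Lemma reds_trans X Y Z : reds X Y -> reds Y Z -> reds X Z.
Proof. induction 1; eauto using reds_step. Qed.

Lemma red_reds X Y : red X Y -> reds X Y.
Proof. eauto using reds_step, reds_refl. Qed.

(* Determinism is what makes convergence invariant under reduction. *)
Lemma conv_red X Y : red X Y -> (conv X <-> conv Y).
Proof.
  intros HXY; split; intros [P HP].
  - inversion HP as [|? X' ? HX' HX'P]; subst.
    + exfalso; eapply Lam_irred; eassumption.
    + rewrite (red_det _ _ _ HXY HX'); exists P; assumption.
  - exists P; eapply reds_step; eassumption.
Qed.

Lemma conv_reds X Y : reds X Y -> (conv X <-> conv Y).
Proof. induction 1 as [|X Y Z HXY _ IH]; [tauto|]. rewrite (conv_red _ _ HXY); exact IH. Qed.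

Fixpoint apps (M : term) (ws : list term) : term :=
  match ws with
  | [] => M
  | w :: ws' => apps (App M w) ws'
  end.

Lemma apps_snoc ws M w : apps M (ws ++ [w]) = App (apps M ws) w.
Proof. revert M; induction ws; simpl; auto. Qed.

Lemma closed_apps ws M : closed M -> Forall closed ws -> closed (apps M ws).
Proof.
  revert M; induction ws; simpl; intros M HM Hws; auto.
  inversion Hws; subst; apply IHws; auto; split; auto.
Qed.

Lemma red_apps ws M M' : red M M' -> red (apps M ws) (apps M' ws).
Proof. revert M M'; induction ws; simpl; auto using red_app. Qed.

Lemma reds_apps ws M M' : reds M M' -> reds (apps M ws) (apps M' ws).
Proof. induction 1; eauto using reds_refl, reds_step, red_apps. Qed.

Lemma apps_Lam ws M P : apps M ws = Lam P -> ws = [] /\ M = Lam P.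
Proof.
  revert M; induction ws as [|w ws IH]; simpl; intros M H; auto.
  destruct (IH _ H); discriminate.
Qed.

Lemma red_apps_inv ws M X :
  red (apps M ws) X -> (forall P, M <> Lam P) -> exists Y, red M Y /\ X = apps Y ws.
Proof.
  revert M X; induction ws as [|w ws IH]; simpl; intros M X H HM; eauto.
  destruct (IH _ _ H) as [Y [HY ->]]; [intros P; discriminate|].
  inversion HY; subst; [eauto|]. exfalso; eapply HM; reflexivity.
Qed.

Lemma conv_apps_beta M P W ws :
  reds M (Lam P) -> (conv (apps M (W :: ws)) <-> conv (apps (subst0 P W) ws)).
Proof.
  intros HM; rewrite (conv_reds _ _ (reds_apps (W :: ws) _ _ HM)).
  apply conv_red; exact (red_apps ws _ _ (red_beta P W)).
Qed.

Definition app_le (M N : term) : Prop :=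
  forall ws, Forall closed ws -> conv (apps M ws) -> conv (apps N ws).

Definition app_equiv (M N : term) : Prop :=
  closed M /\ closed N /\ app_le M N /\ app_le N M.

Lemma app_le_conv M N : app_le M N -> conv M -> conv N.
Proof. intros H; exact (H [] (Forall_nil _)). Qed.

Lemma app_le_trans M N O : app_le M N -> app_le N O -> app_le M O.
Proof. intros H1 H2 ws Hws HM; auto. Qed.

Lemma app_le_App M N W : app_le M N -> closed W -> app_le (App M W) (App N W).
Proof. intros H HW ws Hws; exact (H (W :: ws) (Forall_cons _ HW Hws)). Qed.

Lemma app_le_red M M' : red M M' -> app_le M M' /\ app_le M' M.
Proof. intros H; split; intros ws _; apply (conv_red _ _ (red_apps ws _ _ H)). Qed.

Lemma app_le_beta M N P Q W : app_le M N -> reds M (Lam P) -> reds N (Lam Q) ->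
  closed W -> app_le (subst0 P W) (subst0 Q W).
Proof.
  intros H HP HQ HW ws Hws.
  rewrite <- (conv_apps_beta _ _ _ _ HP), <- (conv_apps_beta _ _ _ _ HQ).
  apply H; constructor; auto.
Qed.

Lemma app_equiv_sym M N : app_equiv M N -> app_equiv N M.
Proof. intros (? & ? & ? & ?); repeat split; auto. Qed.

Lemma app_equiv_trans M N O : app_equiv M N -> app_equiv N O -> app_equiv M O.
Proof. intros (? & _ & ? & ?) (_ & ? & ? & ?); repeat split; eauto using app_le_trans. Qed.

Lemma app_equiv_red M M' : closed M -> red M M' -> app_equiv M M'.
Proof. intros HM H; destruct (app_le_red _ _ H); repeat split; eauto using red_closed. Qed.

Lemma app_equiv_beta M N P Q W : app_equiv M N -> reds M (Lam P) -> reds N (Lam Q) ->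
  closed W -> app_equiv (subst0 P W) (subst0 Q W).
Proof.
  intros (HM & HN & HMN & HNM) HP HQ HW.
  repeat split; eauto using app_le_beta, closed_subst0, reds_closed.
Qed.

Inductive comp (B : relation) : relation :=
| comp_Var n : comp B (Var n) (Var n)
| comp_App a a' b b' : comp B a a' -> comp B b b' -> comp B (App a b) (App a' b')
| comp_Lam a a' : comp B a a' -> comp B (Lam a) (Lam a')
| comp_base M N : B M N -> comp B M N.

Lemma comp_refl B t : comp B t t.
Proof. induction t; constructor; auto. Qed.

Lemma comp_sym (B : relation) : (forall M N, B M N -> B N M) ->
  forall X Y, comp B X Y -> comp B Y X.
Proof. induction 2; constructor; auto. Qed.

Lemma comp_apps B ws X Y : comp B X Y -> comp B (apps X ws) (apps Y ws).
Proof. revert X Y; induction ws; simpl; auto using comp_App, comp_refl. Qed.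

Lemma comp_fill_all (B : relation) C M N : B M N -> comp B (fill_all C M) (fill_all C N).
Proof. induction C; simpl; constructor; auto. Qed.

Lemma comp_subst B : rel_closed B -> forall b b', comp B b b' -> closed b -> closed b' ->
  forall P P', comp B P P' -> forall k, comp B (subst k b P) (subst k b' P').
Proof.
  intros HB b b' Hbb' Hb Hb'; induction 1 as [n| | |M N HMN]; intros k; simpl.
  - destruct (Nat.eqb n k); auto.
    destruct (Nat.ltb k n); constructor.
  - constructor; auto.
  - constructor; auto.
  - destruct (HB _ _ HMN).
    rewrite !subst_closed_at by (eapply closed_at_weaken; [eassumption | lia]).
    constructor; auto.
Qed.

Section Simulation.

Variable B : relation.
Hypothesis B_closed : rel_closed B.
Hypothesis B_app_le : forall M N, B M N -> app_le M N.

Lemma comp_red_sim X Y : comp B X Y -> closed X -> closed Y ->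
  forall X', red X X' -> exists Y', comp B X' Y' /\ closed Y' /\ app_le Y' Y.
Proof.
  induction 1 as [n|a a' b b' Ha IHa Hb _|a a' _ _|M N HMN];
    intros HX HY X' HX'.
  - inversion HX'.
  - destruct HX as [HXa HXb], HY as [HYa HYb].
    inversion HX' as [? a1 ? Ha1|A ?]; subst.
    + destruct (IHa HXa HYa _ Ha1) as (a1' & Hc & Hcl & Hle).
      exists (App a1' b'); repeat split; auto using comp_App, app_le_App.
    + assert (Hsubst : forall A', comp B A A' -> comp B (subst0 A b) (subst0 A' b'))
        by (intros; apply comp_subst; auto).
      inversion Ha as [| |? A' HA|? ? HAa']; subst.
      * exists (subst0 A' b'); repeat split; auto using closed_subst0.
        apply (app_le_red _ _ (red_beta A' b')).
      * (* the redex is fired on the left only: [a'] is applicatively above [Lam A] *)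
        exists (subst0 A b'); repeat split; auto using closed_subst0, comp_refl.
        apply app_le_trans with (App (Lam A) b'); auto using app_le_App.
        apply (app_le_red _ _ (red_beta A b')).
  - inversion HX'.
  - exists X'; repeat split; eauto using comp_refl, red_closed.
    apply app_le_trans with M; auto. apply (app_le_red _ _ HX').
Qed.

Lemma comp_conv X Y : comp B X Y -> closed X -> closed Y -> conv X -> conv Y.
Proof.
  intros HXY HX HY [P HP]; remember (Lam P) as V eqn:HV.
  revert Y HXY HY; induction HP as [X|X X1 V HX1 _ IH]; intros Y HXY HY; subst.
  - inversion HXY as [| |? Q|? ? HB]; subst.
    + exists Q; apply reds_refl.
    + apply (app_le_conv _ _ (B_app_le _ _ HB)); exists P; apply reds_refl.
  - destruct (comp_red_sim _ _ HXY HX HY _ HX1) as (Y1 & HXY1 & HY1 & Hle).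
    apply (app_le_conv _ _ Hle); eauto using red_closed.
Qed.

Lemma comp_app_le X Y : comp B X Y -> closed X -> closed Y -> app_le X Y.
Proof. intros HXY HX HY ws Hws; apply comp_conv; auto using comp_apps, closed_apps. Qed.

End Simulation.

Lemma app_equiv_closed : rel_closed app_equiv.
Proof. intros M N (? & ? & _); auto. Qed.

Lemma comp_app_equiv X Y : comp app_equiv X Y -> closed X -> closed Y -> app_equiv X Y.
Proof.
  intros HXY HX HY.
  assert (Hle : forall M N, app_equiv M N -> app_le M N) by (intros M N (_ & _ & ? & _); auto).
  repeat split; auto; apply comp_app_le with app_equiv; auto using app_equiv_closed.
  apply comp_sym; auto using app_equiv_sym.
Qed.

Fixpoint ctx_of_term (t : term) : ctx :=
  match t with
  | Var n => CVar n
  | App a b => CApp (ctx_of_term a) (ctx_of_term b)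
  | Lam a => CLam (ctx_of_term a)
  end.

Lemma nholes_ctx_of_term t : nholes (ctx_of_term t) = 0.
Proof. induction t; simpl; auto; rewrite IHt1, IHt2; auto. Qed.

Lemma fill_ctx_of_term t l : fill (ctx_of_term t) l = t.
Proof. revert l; induction t; simpl; intros; f_equal; auto. Qed.

Lemma fill_all_ctx_of_term t M : fill_all (ctx_of_term t) M = t.
Proof. induction t; simpl; f_equal; auto. Qed.

Lemma star_refl R W : closed W -> star R W W.
Proof.
  intros HW; exists (ctx_of_term W), [], [].
  rewrite nholes_ctx_of_term, fill_ctx_of_term; repeat split; auto.
Qed.

Lemma Forall2_firstn (R : relation) n l1 l2 :
  Forall2 R l1 l2 -> Forall2 R (firstn n l1) (firstn n l2).
Proof. revert l1 l2; induction n; intros l1 l2 H; simpl; auto; destruct H; simpl; auto. Qed.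

Lemma Forall2_skipn (R : relation) n l1 l2 :
  Forall2 R l1 l2 -> Forall2 R (skipn n l1) (skipn n l2).
Proof. revert l1 l2; induction n; intros l1 l2 H; simpl; auto; destruct H; simpl; auto. Qed.

Lemma comp_fill B C Ms Ns : Forall2 B Ms Ns -> comp B (fill C Ms) (fill C Ns).
Proof.
  revert Ms Ns; induction C; simpl; intros Ms Ns H.
  - constructor.
  - destruct H; [constructor | apply comp_base; auto].
  - constructor; [apply IHC1, Forall2_firstn | apply IHC2, Forall2_skipn]; auto.
  - constructor; auto.
Qed.

Lemma star_comp B P Q : star B P Q -> comp B P Q.
Proof. intros (C & Ms & Ns & _ & HF & -> & -> & _); auto using comp_fill. Qed.

Lemma star_closed R P Q : star R P Q -> closed P /\ closed Q.
Proof. intros (C & Ms & Ns & _ & _ & _ & _ & HPQ); exact HPQ. Qed.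

Lemma app_equiv_subst_star A P Q :
  closed (Lam A) -> star app_equiv P Q -> app_equiv (subst0 A P) (subst0 A Q).
Proof.
  intros HA HPQ; destruct (star_closed _ _ _ HPQ) as [HP HQ].
  apply comp_app_equiv; auto using closed_subst0.
  apply comp_subst; auto using app_equiv_closed, star_comp, comp_refl.
Qed.

Lemma app_equiv_coupled_lbisim : coupled_lbisim app_equiv app_equiv.
Proof.
  split; [exact app_equiv_closed|]; split; [exact app_equiv_closed|]; split; [auto|].
  intros M N HMN; pose proof HMN as (HM & HN & HMN' & HNM').
  repeat split.
  - intros M' HM'. exists N; split; [apply reds_refl|].
    eauto using app_equiv_trans, app_equiv_sym, app_equiv_red.
  - intros M' ->.
    destruct (app_le_conv _ _ HMN') as [N' HN']; [exists M'; apply reds_refl|].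
    exists N'; split; auto. intros P Q HPQ.
    destruct (star_closed _ _ _ HPQ) as [HP HQ].
    apply app_equiv_trans with (subst0 M' Q); auto using app_equiv_subst_star.
    eapply app_equiv_beta; eauto using reds_refl.
  - intros N' HN'. exists M; split; [apply reds_refl|].
    eauto using app_equiv_trans, app_equiv_red.
  - intros N' ->.
    destruct (app_le_conv _ _ HNM') as [M' HM']; [exists N'; apply reds_refl|].
    exists M'; split; auto. intros P Q HPQ.
    destruct (star_closed _ _ _ HPQ) as [HP HQ].
    apply app_equiv_trans with (subst0 N' P); auto using app_equiv_subst_star.
    eapply app_equiv_beta; eauto using reds_refl.
Qed.

Lemma coupled_lbisim_reds_l R1 R2 : coupled_lbisim R1 R2 ->
  forall M V N, reds M V -> R2 M N -> exists N', reds N N' /\ R2 V N'.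
Proof.
  intros (_ & _ & _ & HC) M V N HMV; revert N.
  induction HMV as [M|M M1 V HM1 _ IH]; intros N HMN; eauto using reds_refl.
  destruct (proj1 (HC _ _ HMN) _ HM1) as (N1 & HN1 & HMN1).
  destruct (IH _ HMN1) as (N2 & HN2 & HVN2); eauto using reds_trans.
Qed.

Lemma coupled_lbisim_reds_r R1 R2 : coupled_lbisim R1 R2 ->
  forall M N V, reds N V -> R2 M N -> exists M', reds M M' /\ R2 M' V.
Proof.
  intros (_ & _ & _ & HC) M N V HNV; revert M.
  induction HNV as [N|N N1 V HN1 _ IH]; intros M HMN; eauto using reds_refl.
  destruct (proj1 (proj2 (proj2 (HC _ _ HMN))) _ HN1) as (M1 & HM1 & HMN1).
  destruct (IH _ HMN1) as (M2 & HM2 & HVM2); eauto using reds_trans.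
Qed.

Lemma coupled_lbisim_app_bisim R1 R2 : coupled_lbisim R1 R2 -> app_bisim R2.
Proof.
  intros HC; pose proof HC as (_ & HC2 & _ & HC').
  split; [exact HC2|]; intros M N HMN; split.
  - intros P HP. destruct (coupled_lbisim_reds_l _ _ HC _ _ _ HP HMN) as (N1 & HN1 & HPN1).
    destruct (proj1 (proj2 (HC' _ _ HPN1)) _ eq_refl) as (Q & HQ & HPQ).
    exists Q; split; eauto using reds_trans, star_refl.
  - intros Q HQ. destruct (coupled_lbisim_reds_r _ _ HC _ _ _ HQ HMN) as (M1 & HM1 & HM1Q).
    destruct (proj2 (proj2 (proj2 (HC' _ _ HM1Q))) _ eq_refl) as (P & HP & HPQ).
    exists P; split; eauto using reds_trans, star_refl.
Qed.

Lemma app_bisim_flip R : app_bisim R -> app_bisim (fun M N => R N M).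
Proof.
  intros [Hc HR]; split.
  - intros M N H; destruct (Hc _ _ H); auto.
  - intros M N H; destruct (HR _ _ H) as [H1 H2]; split.
    + intros P HP; destruct (H2 _ HP) as (Q & ? & ?); eauto.
    + intros Q HQ; destruct (H1 _ HQ) as (P & ? & ?); eauto.
Qed.

Lemma is_Lam_dec M : (exists A, M = Lam A) \/ (forall P, M <> Lam P).
Proof. destruct M; [right | right | left]; try (intros P; discriminate); eauto. Qed.

(* Induction on the converging reduction of [apps M' ws], where [M ==> M']. *)
Lemma app_bisim_conv_apps R : app_bisim R ->
  forall X V, reds X V -> forall P, V = Lam P ->
  forall M M' N ws, X = apps M' ws -> reds M M' -> R M N -> Forall closed ws ->
  conv (apps N ws).
Proof.
  intros [_ HR] X V HXV.
  induction HXV as [X|X X1 V HX1 _ IH]; intros P HV M M' N ws HX HMM' HMN Hws; subst.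
  - destruct (apps_Lam _ _ _ (eq_sym HX)) as [-> ->].
    destruct (proj1 (HR _ _ HMN) _ HMM') as (Q & HQ & _); exists Q; auto.
  - destruct (is_Lam_dec M') as [[A ->]|HM'].
    + destruct ws as [|w ws]; [exfalso; eapply Lam_irred; eassumption|].
      inversion Hws; subst.
      rewrite (red_det _ _ _ HX1 (red_apps ws _ _ (red_beta A w))) in IH.
      destruct (proj1 (HR _ _ HMN) _ HMM') as (Q & HQ & HAQ).
      apply (conv_apps_beta _ _ _ _ HQ).
      eapply IH; eauto using reds_refl.
    + destruct (red_apps_inv _ _ _ HX1 HM') as (Y & HY & ->).
      apply (IH P eq_refl M Y N ws eq_refl); eauto using reds_trans, red_reds.
Qed.

Lemma app_bisim_app_le R M N : app_bisim R -> R M N -> app_le M N.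
Proof.
  intros HR HMN ws Hws [P HP]; eapply app_bisim_conv_apps; eauto using reds_refl.
Qed.

Lemma app_bisimilar_app_equiv M N : app_bisimilar M N -> app_equiv M N.
Proof.
  intros (R & HR & HMN); destruct (proj1 HR _ _ HMN).
  repeat split; auto.
  - eapply app_bisim_app_le; eauto.
  - eapply (app_bisim_app_le _ _ _ (app_bisim_flip _ HR)); eauto.
Qed.

Lemma app_bisim_app_equiv : app_bisim app_equiv.
Proof.
  split; [exact app_equiv_closed|]; intros M N HMN.
  pose proof HMN as (_ & _ & HMN' & HNM'); split.
  - intros P HP. destruct (app_le_conv _ _ HMN') as [Q HQ]; [exists P; auto|].
    exists Q; split; eauto using app_equiv_beta.
  - intros Q HQ. destruct (app_le_conv _ _ HNM') as [P HP]; [exists Q; auto|].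
    exists P; split; eauto using app_equiv_beta.
Qed.

Fixpoint elist (E : ectx) : list term :=
  match E with
  | EHole => []
  | EApp E' w => elist E' ++ [w]
  end.

Lemma efill_apps E M : efill E M = apps M (elist E).
Proof. induction E; simpl; auto; rewrite apps_snoc, IHE; auto. Qed.

Lemma ectx_ok_elist E : ectx_ok E -> Forall closed (elist E).
Proof. induction E; simpl; intros H; auto; destruct H; apply Forall_app; auto. Qed.

Fixpoint ectx_apps (E : ectx) (ws : list term) : ectx :=
  match ws with
  | [] => E
  | w :: ws' => ectx_apps (EApp E w) ws'
  end.

Lemma efill_ectx_apps ws E M : efill (ectx_apps E ws) M = apps (efill E M) ws.
Proof. revert E; induction ws; simpl; auto. Qed.

Lemma ectx_ok_apps ws E : ectx_ok E -> Forall closed ws -> ectx_ok (ectx_apps E ws).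
Proof.
  revert E; induction ws; simpl; intros E HE Hws; auto.
  inversion Hws; subst; apply IHws; simpl; auto.
Qed.

Lemma eval_equiv_app_equiv M N : closed M -> closed N ->
  (eval_equiv M N <-> app_equiv M N).
Proof.
  intros HM HN; split.
  - intros H; repeat split; auto; intros ws Hws;
      pose proof (H (ectx_apps EHole ws) (ectx_ok_apps ws EHole I Hws)) as HE;
      rewrite !efill_ectx_apps in HE; apply HE.
  - intros (_ & _ & HMN & HNM) E HE; rewrite !efill_apps.
    split; [apply HMN | apply HNM]; apply ectx_ok_elist; auto.
Qed.

Fixpoint ctx_apps (C : ctx) (ws : list term) : ctx :=
  match ws with
  | [] => C
  | w :: ws' => ctx_apps (CApp C (ctx_of_term w)) ws'
  end.

Lemma fill_all_ctx_apps ws C M : fill_all (ctx_apps C ws) M = apps (fill_all C M) ws.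
Proof.
  revert C; induction ws; simpl; intros C; auto.
  rewrite IHws; simpl; rewrite fill_all_ctx_of_term; auto.
Qed.

Lemma ctx_equiv_app_equiv M N : closed M -> closed N ->
  (ctx_equiv M N <-> app_equiv M N).
Proof.
  intros HM HN; split.
  - intros H; repeat split; auto; intros ws Hws;
      pose proof (H (ctx_apps CHole ws)) as HC; rewrite !fill_all_ctx_apps in HC;
      apply HC; apply closed_apps; auto.
  - intros HMN C HCM HCN.
    destruct (comp_app_equiv _ _ (comp_fill_all _ C _ _ HMN) HCM HCN) as (_ & _ & H1 & H2).
    split; apply app_le_conv; auto.
Qed.

Theorem mainTheorem10 : forall M N : term, closed M -> closed N ->
  (app_bisimilar M N <-> clb2 M N) /\
  (clb2 M N <-> eval_equiv M N) /\
  (eval_equiv M N <-> ctx_equiv M N) /\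
  (ctx_equiv M N <-> clb1 M N).
Proof.
  intros M N HM HN.
  assert (Happ : app_bisimilar M N <-> app_equiv M N).
  { split; [apply app_bisimilar_app_equiv|].
    intros H; exists app_equiv; split; auto using app_bisim_app_equiv. }
  assert (Hclb2 : clb2 M N <-> app_equiv M N).
  { split.
    - intros (R1 & R2 & HC & H); apply app_bisimilar_app_equiv.
      exists R2; split; eauto using coupled_lbisim_app_bisim.
    - intros H; exists app_equiv, app_equiv; auto using app_equiv_coupled_lbisim. }
  assert (Hclb1 : clb1 M N <-> app_equiv M N).
  { split.
    - intros (R1 & R2 & HC & H); apply Hclb2.
      exists R1, R2; split; [|apply HC]; auto.
    - intros H; exists app_equiv, app_equiv; auto using app_equiv_coupled_lbisim. }
  rewrite Happ, Hclb2, Hclb1, eval_equiv_app_equiv, ctx_equiv_app_equiv by auto.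
  tauto.
Qed.
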